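(* Let $n$ and $d$ be positive integers such that the largest prime $q_d$ smaller than $n/d$ exists and satisfies $q_d>n/(d+1)$, and let $\beta_d=n-dq_d$. Let $p^a$ ($p$ prime, $a\ge1$) be a prime power dividing $n$ with $p\ne q_d$. For each integer $\delta$ with $0\le\delta\le\beta_d$, let $N(\delta)$ be the number of integer solutions $(x,y)$ of $p^a x-q_d y=\delta$ with $x>0$ and $0\le y\le\lfloor d/2\rfloor$. Then $n$ satisfies the $N$-variation of Condition 1 with \[N=2+\sum_{\delta=0}^{\beta_d}N(\delta).\]
   Context: A positive integer $n$ satisfies the $N$-variation of Condition 1 if there exist $N$ different primes $p_1,\dots,p_N$ such that for every $1\le k\le n-1$, $\binom{n}{k}$ is divisible by at least one of $p_1,\dots,p_N$. *)

From mathcomp Require Import all_boot.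
Set Implicit Arguments. Unset Strict Implicit. Unset Printing Implicit Defensive.

Definition condition1_var (N n : nat) : Prop :=
  exists ps : seq nat,
    [/\ uniq ps, size ps = N, all prime ps &
        forall k, 0 < k < n -> has (fun p => p %| 'C(n, k)) ps].

(* N(delta) = #{(x,y) in Z^2 : pa*x - q*y = delta, x > 0, 0 <= y <= floor(d/2)}.
   Since pa >= 1 and y >= 0, any solution has 1 <= x <= delta + q*(d/2), so
   the set is enumerated over this finite box (with the equation written in nat
   without subtraction as pa*x = delta + q*y). *)
Definition Nsol (pa q d delta : nat) : nat :=
  \sum_(0 <= y < (d./2).+1)
    \sum_(1 <= x < (delta + q * d./2).+1) (pa * x == delta + q * y).

From mathcomp Require Import all_boot zify.
Set Implicit Arguments. Unset Strict Implicit. Unset Printing Implicit Defensive.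

(* Write q = q_d and b = n - d q, so that n = d q + b with b < q.  If q does not
   divide C(n, k), Kummer's theorem (no carry in the units digit of k + (n - k)
   in base q) gives k mod q <= b; if p does not divide C(n, k), then p^a | k
   since n | k C(n, k).  Replacing k by n - k, which sends k div q to
   d - k div q, we may assume k div q <= d/2.  The remaining k = q y + delta,
   with y <= d/2, delta <= b and p^a | k, are counted by the sum of the N(delta);
   one prime factor of C(n, k) for each of them, together with p and q, and
   fresh primes as padding, give the N primes. *)

Lemma logn_fact_upto p m N : prime p -> m <= N ->
  logn p m`! = \sum_(1 <= i < N.+1) m %/ p ^ i.
Proof.
move=> p_pr le_mN; rewrite logn_fact // [RHS](big_cat_nat (n := m.+1)) //=.
rewrite [X in _ + X]big1_seq ?addn0 // => i /andP[_].
rewrite mem_index_iota => /andP[lt_mi _]; apply: divn_small.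
exact: leq_trans lt_mi (ltnW (ltn_expl _ (prime_gt1 p_pr))).
Qed.

(* Kummer's theorem: the i-th term is the carry out of digit i - 1 when adding
   k and n - k in base p. *)
Lemma logn_bin p n k : prime p -> k <= n ->
  logn p 'C(n, k) = \sum_(1 <= i < n.+1) (p ^ i <= k %% p ^ i + (n - k) %% p ^ i).
Proof.
move=> p_pr le_kn.
have := congr1 (logn p) (bin_fact le_kn).
rewrite !lognM ?muln_gt0 ?fact_gt0 ?bin_gt0 //.
rewrite !(logn_fact_upto p_pr (leqnn n)) (logn_fact_upto p_pr le_kn).
rewrite (logn_fact_upto p_pr (leq_subr k n)).
under [in RHS]eq_bigr => i _ do
  rewrite -{1}(subnKC le_kn) divnD ?expn_gt0 ?prime_gt0 //.
by rewrite !big_split /= addnC => /addnI.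
Qed.

Lemma ndvd_bin_leq_mod p n k : prime p -> k <= n -> ~~ (p %| 'C(n, k)) ->
  k %% p <= n %% p.
Proof.
move=> p_pr le_kn ndvd_pC; have [n0|n_gt0] := posnP n.
  by move: le_kn; rewrite n0 leqn0 => /eqP->.
have : logn p 'C(n, k) = 0 by rewrite lognE (negbTE ndvd_pC) !andbF.
rewrite logn_bin // big_ltn // expn1 => /eqP; rewrite addn_eq0 eqb0 -ltnNge => /andP[no_carry _].
rewrite -[in n %% p](subnKC le_kn) modnD ?prime_gt0 //.
by rewrite [p <= _]leqNgt no_carry subn0 leq_addr.
Qed.

Lemma pfactor_dvdn_of_ndvd_bin p a n k : prime p -> p ^ a %| n -> 0 < k ->
  ~~ (p %| 'C(n, k)) -> p ^ a %| k.
Proof.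
move=> p_pr dvd_pa_n; case: k => // k _ ndvd_pC.
have dvd_n_kC : n %| k.+1 * 'C(n, k.+1) by rewrite -mul_bin_diag dvdn_mulr.
have co_paC : coprime (p ^ a) 'C(n, k.+1) by rewrite coprimeXl ?prime_coprime.
by rewrite -(Gauss_dvdl _ co_paC); apply: dvdn_trans dvd_n_kC.
Qed.

Lemma divnB_of_ndvd_bin p n k : prime p -> k <= n -> ~~ (p %| 'C(n, k)) ->
  (n - k) %/ p = n %/ p - k %/ p.
Proof.
move=> p_pr le_kn ndvd_pC.
by rewrite divnB ?prime_gt0 // ltnNge ndvd_bin_leq_mod // subn0.
Qed.

Lemma bin_gt1 n k : 0 < k < n -> 1 < 'C(n, k).
Proof.
case/andP=> k_gt0 lt_kn; apply: leq_trans (leq_bin2l k lt_kn).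
by rewrite binSn ltnS.
Qed.

Lemma dvdn_sum_mul_eq_gt0 c j M : 0 < j -> c %| j -> j < M ->
  0 < \sum_(1 <= x < M) (c * x == j).
Proof.
move=> j_gt0 /dvdnP[x def_j] lt_jM.
have /andP[x_gt0 c_gt0] : (0 < x) && (0 < c) by rewrite -muln_gt0 -def_j.
have lt_xM : x < M by apply: leq_ltn_trans lt_jM; rewrite def_j leq_pmulr.
rewrite (bigD1_seq x) ?iota_uniq ?mem_index_iota ?x_gt0 //=.
by rewrite def_j mulnC eqxx.
Qed.

(* Cut [0, (d/2 + 1) q) into the blocks [y q, y q + q): only the offsets
   delta <= b survive, and k = delta + q y with pa | k gives the solution
   x = k / pa counted by N(delta). *)
Lemma count_le_sum_Nsol (P : pred nat) n pa q d b : b < q ->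
  (forall k, k < n -> P k -> [&& 0 < k, pa %| k, k %% q <= b & k %/ q <= d./2]) ->
  count P (iota 0 n) <= \sum_(0 <= delta < b.+1) Nsol pa q d delta.
Proof.
move=> lt_bq P_sol; have q_gt0 : 0 < q by apply: leq_ltn_trans lt_bq.
pose B k := [&& 0 < k, pa %| k & k %% q <= b].
have count_le_B : count P (iota 0 n) <= count B (iota 0 ((d./2).+1 * q)).
  rewrite -!size_filter; apply: uniq_leq_size; first exact/filter_uniq/iota_uniq.
  move=> k; rewrite !mem_filter !mem_iota add0n => /andP[Pk lt_kn].
  have /and4P[k_gt0 dvd_pa_k le_kq_b le_kq] := P_sol k lt_kn Pk.
  by rewrite /B k_gt0 dvd_pa_k le_kq_b -ltn_divLR // ltnS.
apply: leq_trans count_le_B _.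
have -> : count B (iota 0 ((d./2).+1 * q)) = \sum_(0 <= k < (d./2).+1 * q) B k.
  by rewrite -sum1_count big_mkcond /index_iota subn0; apply: eq_bigr => k _; case: (B k).
rewrite big_nat_mul /Nsol exchange_big_nat /=.
rewrite big_nat [X in _ <= X]big_nat; apply: leq_sum => y /andP[_ le_y].
rewrite -{1}(add0n (y * q)) big_addn mulSn addnK (big_cat_nat (n := b.+1)) //=.
rewrite [X in _ + X]big1_seq ?addn0 => [|delta]; last first.
  rewrite mem_index_iota => /andP[_ /andP[lt_b_delta lt_delta_q]].
  by rewrite /B addnC modnMDl modn_small // [delta <= b]leqNgt lt_b_delta !andbF.
rewrite big_nat [X in _ <= X]big_nat; apply: leq_sum => delta /andP[_ le_delta_b].
rewrite [y * q]mulnC /B; case: and3P => // -[k_gt0 dvd_pa_k _].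
apply: dvdn_sum_mul_eq_gt0 => //.
by rewrite ltnS leq_add2l leq_mul2l -ltnS le_y orbT.
Qed.

Lemma exists_fresh_primes s m : uniq s ->
  exists t, [/\ uniq (t ++ s), all prime t & size t = m].
Proof.
move=> uniq_s; elim: m => [|m [t [uniq_ts prime_t size_t]]]; first by exists [::].
have [r gt_r_max prime_r] := prime_above (\max_(x <- t ++ s) x).
exists (r :: t); split; rewrite /= ?prime_r ?size_t //.
rewrite uniq_ts andbT; apply/negP => ts_r.
by move: gt_r_max; rewrite ltnNge (leq_bigmax_seq (F := id) _ ts_r isT).
Qed.

Lemma condition1_var_of_cover N n s :
  all prime s -> size s <= N ->
  (forall k, 0 < k < n -> has (fun p => p %| 'C(n, k)) s) ->
  condition1_var N n.
Proof.
move=> prime_s size_s cover_s.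
have [t [uniq_ts prime_t size_t]] := exists_fresh_primes (N - size (undup s)) (undup_uniq s).
exists (t ++ undup s); split => //.
- by rewrite size_cat size_t subnK // (leq_trans (size_undup s)).
- by rewrite all_cat prime_t all_undup.
- move=> k /cover_s /hasP[p s_p dvd_pC]; apply/hasP; exists p => //.
  by rewrite mem_cat mem_undup s_p orbT.
Qed.

Lemma exists_low_bin_sym q n k : prime q -> 0 < k < n -> ~~ (q %| 'C(n, k)) ->
  exists2 j, [&& 0 < j, j < n & j %/ q <= (n %/ q)./2] & 'C(n, j) = 'C(n, k).
Proof.
move=> q_pr /andP[k_gt0 lt_kn] ndvd_qC.
have [le_kq|lt_kq] := leqP (k %/ q) (n %/ q)./2; first by exists k; rewrite ?k_gt0 ?lt_kn.
have le_kq : k %/ q <= n %/ q by rewrite leq_div2r // ltnW.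
exists (n - k); last exact: bin_sub (ltnW lt_kn).
rewrite subn_gt0 lt_kn ltn_subrL k_gt0 (ltn_trans k_gt0 lt_kn).
rewrite (divnB_of_ndvd_bin q_pr (ltnW lt_kn) ndvd_qC) /=; lia.
Qed.

Theorem mainTheorem15 (n d q p a : nat) :
  0 < n -> 0 < d ->
  (* q = q_d is the largest prime smaller than n/d *)
  prime q -> q * d < n -> (forall r, prime r -> r * d < n -> r <= q) ->
  (* q_d > n/(d+1) *)
  n < q * d.+1 ->
  prime p -> 0 < a -> p ^ a %| n -> p != q ->
  condition1_var
    (2 + \sum_(0 <= delta < (n - d * q).+1) Nsol (p ^ a) q d delta) n.
Proof.
move=> _ _ q_pr lt_qd_n _ lt_n_qd1 p_pr _ dvd_pa_n _.
have q_gt0 := prime_gt0 q_pr.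
have lt_bq : n - d * q < q by move: lt_n_qd1; rewrite mulnS mulnC; lia.
have n_eq : d * q + (n - d * q) = n by rewrite subnKC // mulnC ltnW.
have n_mod : n %% q = n - d * q by rewrite -[in LHS]n_eq modnMDl modn_small.
have n_div : n %/ q = d by rewrite -[in LHS]n_eq divnMDl // divn_small ?addn0.
pose low k := [&& 0 < k, ~~ (p %| 'C(n, k)), ~~ (q %| 'C(n, k)) & k %/ q <= d./2].
apply: (condition1_var_of_cover (s := p :: q :: [seq pdiv 'C(n, k) | k <- iota 0 n & low k])).
- apply/and3P; split=> //; apply/allP => x /mapP[k].
  rewrite mem_filter mem_iota => /andP[/and4P[k_gt0 _ _ _] /andP[_ lt_kn]] ->.
  exact/pdiv_prime/bin_gt1/andP.
- rewrite [size _]/= size_map size_filter add2n !ltnS.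
  apply: count_le_sum_Nsol lt_bq _ => k lt_kn /and4P[k_gt0 ndvd_p ndvd_q ->].
  rewrite k_gt0 -n_mod (ndvd_bin_leq_mod q_pr (ltnW lt_kn) ndvd_q).
  by rewrite (pfactor_dvdn_of_ndvd_bin p_pr dvd_pa_n).
move=> k lt0kn; apply/hasP.
case: (boolP (p %| 'C(n, k))) => [dvd_p|ndvd_p]; first by exists p; rewrite ?inE ?eqxx.
case: (boolP (q %| 'C(n, k))) => [dvd_q|ndvd_q]; first by exists q; rewrite ?inE ?eqxx ?orbT.
have [j /and3P[j_gt0 lt_jn low_j] C_jk] := exists_low_bin_sym q_pr lt0kn ndvd_q.
exists (pdiv 'C(n, k)); last exact: pdiv_dvd.
rewrite !inE -C_jk (map_f (fun k => pdiv 'C(n, k))) ?orbT //.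
by rewrite mem_filter mem_iota /low C_jk j_gt0 ndvd_p ndvd_q -n_div low_j lt_jn.
Qed.
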